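(* Let $k$ be a field, $n$ a positive integer, and $\mathcal B\subseteq\{1,\ldots,n\}\times\{1,\ldots,n\}$ such that $(i,i)\in\mathcal B$ for all $i$ and $(i,l)\in\mathcal B$ whenever $(i,j)\in\mathcal B$ and $(j,l)\in\mathcal B$. Then the structural matrix algebra $\mathcal M(\mathcal B,k)$ is a Frobenius algebra if and only if $\mathcal B=(I_1\times I_1)\cup\cdots\cup(I_r\times I_r)$ for some partition $I_1,\ldots,I_r$ of $\{1,\ldots,n\}$. In this case $\mathcal M(\mathcal B,k)\simeq M_{n_1}(k)\times\cdots\times M_{n_r}(k)$, where $n_j=|I_j|$.
   Context: Let $e_{i,j}$ denote the matrix units of $M_n(k)$. The structural matrix algebra associated to $\mathcal B$ is the subalgebra $\mathcal M(\mathcal B,k)=\sum_{(i,j)\in\mathcal B}k e_{i,j}$ of $M_n(k)$, i.e. the matrices whose $(i,j)$-entries vanish for $(i,j)\notin\mathcal B$. A finite dimensional $k$-algebra $A$ is Frobenius if $A\cong A^*$ as left (equivalently right) $A$-modules. *)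

From HB Require Import structures.
From mathcomp Require Import all_boot all_order all_algebra.
Set Implicit Arguments. Unset Strict Implicit. Unset Printing Implicit Defensive.
Import GRing.Theory.
Local Open Scope ring_scope.

(* Indices {1,...,n} are rendered as 'I_n = {0,...,n-1}. *)

Definition sma (k : fieldType) (n : nat) (B : rel 'I_n) : pred 'M[k]_n :=
  fun A => [forall i, forall j, ~~ B i j ==> (A i j == 0)].
Arguments sma k {n} B.

(* k-linear functionals on the subspace S of M_n(k) (represented by functions
   on the ambient space, which are only looked at on S). *)
Definition lin_functional_on (k : fieldType) (n : nat) (S : pred 'M[k]_n)
  (f : 'M[k]_n -> k) : Prop :=
  (forall x y, x \in S -> y \in S -> f (x + y) = f x + f y) /\
  (forall (c : k) x, x \in S -> f (c *: x) = c * f x).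

(* A subalgebra S of M_n(k) (e.g. a structural matrix algebra) is Frobenius
   iff S is isomorphic to its dual S* = Hom_k(S,k) as left S-modules, where
   S acts on S* by (a . f)(y) = f (y a).  phi x is the functional attached
   to x; phi must be k-linear, S-linear, injective and surjective. *)
Definition Frobenius_sub (k : fieldType) (n : nat) (S : pred 'M[k]_n) : Prop :=
  exists phi : 'M[k]_n -> 'M[k]_n -> k,
    (forall x, x \in S -> lin_functional_on S (phi x)) /\
    [/\ 
        (forall x y z, x \in S -> y \in S -> z \in S ->
           phi (x + y) z = phi x z + phi y z),
        (forall (c : k) x z, x \in S -> z \in S -> phi (c *: x) z = c * phi x z),
        (forall a x y, a \in S -> x \in S -> y \in S ->
           phi (a *m x) y = phi x (y *m a)),
        (forall x, x \in S -> (forall y, y \in S -> phi x y = 0) -> x = 0)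
      & (forall f, lin_functional_on S f ->
           exists2 x, x \in S & forall y, y \in S -> phi x y = f y)].

Definition is_partition (n r : nat) (P : 'I_r -> {set 'I_n}) : Prop :=
  [/\ (forall j, P j != set0),
      (forall j j', j != j' -> [disjoint P j & P j'])
    & (forall i, exists j, i \in P j)].

Definition blocks_rel (n r : nat) (P : 'I_r -> {set 'I_n}) : rel 'I_n :=
  fun i l => [exists j, (i \in P j) && (l \in P j)].

(* k-algebra isomorphism between a subalgebra S of M_n(k) and the product
   M_{sz 1}(k) x ... x M_{sz r}(k), the latter given as dependent functions
   with componentwise operations. *)
Definition alg_iso_prod (k : fieldType) (n r : nat) (S : pred 'M[k]_n)
  (sz : 'I_r -> nat) : Prop :=
  exists f : 'M[k]_n -> forall j : 'I_r, 'M[k]_(sz j),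
    (forall x y, x \in S -> y \in S -> forall j, f (x + y) j = f x j + f y j) /\
    [/\ 
        (forall (c : k) x, x \in S -> forall j, f (c *: x) j = c *: f x j),
        (forall x y, x \in S -> y \in S -> forall j, f (x *m y) j = f x j *m f y j),
        (forall j, f 1%:M j = 1%:M),
        (forall x y, x \in S -> y \in S -> (forall j, f x j = f y j) -> x = y)
      & (forall g : forall j : 'I_r, 'M[k]_(sz j),
           exists2 x, x \in S & forall j, f x j = g j)].

From mathcomp Require Import all_boot all_order all_algebra.
Set Implicit Arguments. Unset Strict Implicit. Unset Printing Implicit Defensive.
Import GRing.Theory.
Local Open Scope ring_scope.

(* If B is symmetric, the trace form (x, y) |-> tr (y x) is nondegenerate on
   M(B,k), and M(B,k) is Frobenius.  Conversely, a Frobenius isomorphism phi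
   gives the linear form t = phi _ 1 with phi x y = t (y x).  Taking for each p
   the x_p dual to the coordinate form y |-> y p q, the matrices
   (t (e_ab))_{a -> q, q -> b} and ((x_p) q b)_{q -> b, p -> q} multiply to the
   identity, so q has no more predecessors than successors.
   For a preorder this forces symmetry: from a pair i -> j with no way back,
   take m with i -> m, not m -> i, and as few successors as possible; its
   successors form a proper subset of its predecessors.  An equivalence
   relation is a block relation, and cutting a matrix into its diagonal
   blocks is the isomorphism with the product of full matrix algebras. *)

Lemma mxtrace_delta_mulmx (k : fieldType) (n : nat) (i j : 'I_n) (x : 'M[k]_n) :
  \tr (delta_mx j i *m x) = x i j.
Proof.
rewrite /mxtrace (bigD1 j) //= big1 ?addr0.
  rewrite mxE (bigD1 i) //= big1 ?addr0; first by rewrite mxE !eqxx mul1r.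
  by move=> l nl; rewrite mxE eqxx (negbTE nl) mul0r.
by move=> c nc; rewrite mxE big1 // => l _; rewrite mxE (negbTE nc) mul0r.
Qed.

Lemma delta_mulmx_entry (k : fieldType) (n : nat) (a q a' b : 'I_n) (w : 'M[k]_n) :
  (delta_mx a q *m w) a' b = (a' == a)%:R * w q b.
Proof.
rewrite mxE (bigD1 q) //= big1 ?addr0; first by rewrite mxE eqxx andbT.
by move=> l nl; rewrite mxE (negbTE nl) andbF mul0r.
Qed.

Lemma leq_of_mulmx_eq1 (F : fieldType) (m p : nat) (M : 'M[F]_(m, p)) (W : 'M_(p, m)) :
  M *m W = 1%:M -> (m <= p)%N.
Proof.
move=> MW; have := mxrankM_maxr M W; rewrite MW mxrank1.
by move/leq_trans; apply; apply: rank_leq_row.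
Qed.

Section StructuralMatrixAlgebra.
Variables (k : fieldType) (n : nat) (B : rel 'I_n).
Local Notation S := (sma k B).

Lemma smaP (x : 'M[k]_n) : reflect (forall i j, ~~ B i j -> x i j = 0) (x \in S).
Proof.
rewrite unfold_in /sma; apply: (iffP forallP) => [H i j nB|H i].
  by have /forallP/(_ j)/implyP/(_ nB)/eqP := H i.
by apply/forallP => j; apply/implyP => nB; rewrite H.
Qed.

Lemma sma0 : (0 : 'M[k]_n) \in S.
Proof. by apply/smaP => i j _; rewrite mxE. Qed.

Lemma smaD x y : x \in S -> y \in S -> x + y \in S.
Proof. by move=> /smaP Hx /smaP Hy; apply/smaP => i j nB; rewrite mxE Hx ?Hy ?addr0. Qed.

Lemma smaZ (c : k) x : x \in S -> c *: x \in S.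
Proof. by move=> /smaP Hx; apply/smaP => i j nB; rewrite mxE Hx ?mulr0. Qed.

Lemma sma_sum (I : Type) (r : seq I) (P : pred I) (F : I -> 'M[k]_n) :
  (forall i, P i -> F i \in S) -> \sum_(i <- r | P i) F i \in S.
Proof. by move=> FS; apply: (big_ind (fun x => x \in S)); [exact: sma0|exact: smaD|]. Qed.

Lemma sma_delta i j : B i j -> delta_mx i j \in S.
Proof.
move=> Bij; apply/smaP => a b nB; rewrite mxE.
by case: eqP => [ea|//]; case: eqP => [eb|//]; move: nB; rewrite ea eb Bij.
Qed.

Lemma sma_scale_delta x i j : x \in S -> x i j *: delta_mx i j \in S.
Proof.
move=> /smaP xS; case: (boolP (B i j)) => Bij; first by rewrite smaZ ?sma_delta.
by rewrite xS // scale0r sma0.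
Qed.

Section LinearFunctional.
Variable f : 'M[k]_n -> k.
Hypothesis flin : lin_functional_on S f.

Lemma lin_functional0 : f 0 = 0.
Proof. by rewrite -(scale0r (0 : 'M[k]_n)) (proj2 flin) ?mul0r ?sma0. Qed.

Lemma lin_functional_sum (I : Type) (r : seq I) (P : pred I) (F : I -> 'M[k]_n) :
  (forall i, P i -> F i \in S) ->
  f (\sum_(i <- r | P i) F i) = \sum_(i <- r | P i) f (F i).
Proof.
move=> FS; elim: r => [|x r IH]; first by rewrite !big_nil lin_functional0.
by rewrite !big_cons; case: ifP => Px //; rewrite (proj1 flin) ?IH ?FS ?sma_sum.
Qed.

Lemma lin_functional_expand y : y \in S ->
  f y = \sum_(a < n) \sum_(b < n) y a b * f (delta_mx a b).
Proof.
move=> yS; rewrite {1}(matrix_sum_delta y) lin_functional_sum; last first.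
  by move=> a _; apply: sma_sum => b _; apply: sma_scale_delta.
apply: eq_bigr => a _; rewrite lin_functional_sum; last first.
  by move=> b _; apply: sma_scale_delta.
apply: eq_bigr => b _; case: (boolP (B a b)) => Bab.
  by rewrite (proj2 flin) // sma_delta.
by move/smaP: yS => ->; rewrite // scale0r mul0r lin_functional0.
Qed.

End LinearFunctional.

Lemma sma_frobenius_of_sym : (forall i j, B i j -> B j i) -> Frobenius_sub S.
Proof.
move=> Bsym; exists (fun x y => \tr (y *m x)); split.
  move=> x _; split => [y z _ _|c y _]; first by rewrite mulmxDl mxtraceD.
  by rewrite -scalemxAl mxtraceZ.
split.
- by move=> x y z _ _ _; rewrite mulmxDr mxtraceD.
- by move=> c x z _ _; rewrite -scalemxAr mxtraceZ.
- by move=> a x y _ _ _; rewrite mulmxA.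
- move=> x /smaP xS tr0; apply/matrixP => i j; rewrite mxE.
  case: (boolP (B i j)) => Bij; last by rewrite xS.
  by rewrite -mxtrace_delta_mulmx tr0 // sma_delta // Bsym.
- move=> f flin; exists (\matrix_(a, b) if B b a then f (delta_mx b a) else 0).
    apply/smaP => a b nB; rewrite mxE; case: ifP => // Bba.
    by move: nB; rewrite Bsym.
  move=> y yS; rewrite (lin_functional_expand flin yS).
  apply: eq_bigr => a _; rewrite mxE; apply: eq_bigr => b _; rewrite !mxE.
  by case: ifP => // nBab; move/smaP: yS => ->; rewrite ?nBab // !mul0r.
Qed.

End StructuralMatrixAlgebra.

Section Preorder.
Variables (T : finType) (B : rel T).
Hypothesis Brefl : forall i, B i i.
Hypothesis Btrans : forall i j l, B i j -> B j l -> B i l.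

Definition preds q := [set a | B a q].
Definition succs q := [set b | B q b].

Lemma sym_of_card_preds_le_succs :
  (forall q, #|preds q| <= #|succs q|)%N -> forall i j, B i j -> B j i.
Proof.
move=> card_le i j Bij; apply/negPn/negP => nBji.
pose Q l := B i l && ~~ B l i.
have Qj : Q j by rewrite /Q Bij.
have [m /andP[Bim nBmi] m_min] := arg_minnP (fun l => #|succs l|) Qj.
have succs_preds : succs m \proper preds m.
  apply/properP; split; last by exists i; rewrite !inE ?Bim.
  apply/subsetP => l; rewrite !inE => Bml; apply/negPn/negP => nBlm.
  have Ql : Q l.
    rewrite /Q (Btrans Bim Bml) /=; apply/negP => Bli.
    by move: nBlm; rewrite (Btrans Bli Bim).
  have := m_min l Ql; apply/negP; rewrite -ltnNge; apply: proper_card.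
  apply/properP; split; last by exists m; rewrite !inE ?Brefl.
  by apply/subsetP => x; rewrite !inE; apply: Btrans.
by have := proper_card succs_preds; rewrite ltnNge card_le.
Qed.

End Preorder.

Section FrobeniusPreorder.
Variables (k : fieldType) (n : nat) (B : rel 'I_n).
Hypothesis Brefl : forall i, B i i.
Hypothesis Btrans : forall i j l, B i j -> B j l -> B i l.
Local Notation S := (sma k B).

Lemma sma1 : (1%:M : 'M[k]_n) \in S.
Proof.
apply/smaP => i j nB; rewrite mxE; case: eqP => // eij.
by move: nB; rewrite eij Brefl.
Qed.

Lemma smaM (x y : 'M[k]_n) : x \in S -> y \in S -> x *m y \in S.
Proof.
move=> /smaP Hx /smaP Hy; apply/smaP => i j nB; rewrite mxE big1 // => l _.
case: (boolP (B i l)) => Bil; last by rewrite Hx ?mul0r.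
case: (boolP (B l j)) => Blj; last by rewrite Hy ?mulr0.
by move: nB; rewrite (Btrans Bil Blj).
Qed.

Section FrobeniusForm.
Variable phi : 'M[k]_n -> 'M[k]_n -> k.
Hypothesis phiD : forall x y z, x \in S -> y \in S -> z \in S ->
  phi (x + y) z = phi x z + phi y z.
Hypothesis phiZ : forall (c : k) x z, x \in S -> z \in S -> phi (c *: x) z = c * phi x z.
Hypothesis phiM : forall a x y, a \in S -> x \in S -> y \in S ->
  phi (a *m x) y = phi x (y *m a).
Hypothesis phi_onto : forall f, lin_functional_on S f ->
  exists2 x, x \in S & forall y, y \in S -> phi x y = f y.

Let t z := phi z 1%:M.

Let t_lin : lin_functional_on S t.
Proof. by split => [x y xS yS|c x xS]; rewrite /t ?phiD ?phiZ ?sma1. Qed.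

Let phi_t x y : x \in S -> y \in S -> phi x y = t (y *m x).
Proof. by move=> xS yS; rewrite /t phiM ?sma1 // mul1mx. Qed.

Lemma frobenius_coord_dual p q :
  exists2 x, x \in S & forall y, y \in S -> phi x y = y p q.
Proof. by apply: phi_onto; split => [x y _ _|c x _]; rewrite mxE. Qed.

(* phi x (delta_mx a q) = (a == p)%:R, and delta_mx a q *m x is row q of x
   moved to row a. *)
Lemma frobenius_coord_dualE p q a x : B a q -> x \in S ->
    (forall y, y \in S -> phi x y = y p q) ->
  \sum_(b in succs B q) x q b * t (delta_mx a b) = (a == p)%:R.
Proof.
move=> Baq xS xdual; have aqS := sma_delta k Baq.
have := xdual _ aqS; rewrite mxE eqxx andbT eq_sym => <-.
rewrite phi_t // (lin_functional_expand t_lin) ?smaM //.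
rewrite [RHS](bigD1 a) //= [X in _ + X]big1 ?addr0; last first.
  by move=> a' na; apply: big1 => b _; rewrite delta_mulmx_entry (negbTE na) !mul0r.
rewrite big_mkcond; apply: eq_bigr => b _; rewrite delta_mulmx_entry eqxx mul1r inE.
by case: ifP => // nBqb; move/smaP: xS => ->; rewrite ?nBqb ?mul0r.
Qed.

Lemma frobenius_card_preds_le_succs q : (#|preds B q| <= #|succs B q|)%N.
Proof.
have /fin_all_exists[x xdual] : forall p, exists x : 'M[k]_n,
    x \in S /\ forall y, y \in S -> phi x y = y p q.
  by move=> p; have [x xS xdual] := frobenius_coord_dual p q; exists x.
pose M : 'M[k]_(#|preds B q|, #|succs B q|) :=
  \matrix_(i, c) t (delta_mx (enum_val i) (enum_val c)).
pose W : 'M[k]_(#|succs B q|, #|preds B q|) :=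
  \matrix_(c, p) x (enum_val p) q (enum_val c).
apply: (@leq_of_mulmx_eq1 _ _ _ M W); apply/matrixP => i p; rewrite !mxE.
have Biq : B (enum_val i) q by have := enum_valP i; rewrite inE.
rewrite -(inj_eq enum_val_inj) -(frobenius_coord_dualE Biq (xdual _).1 (xdual _).2).
rewrite [RHS](big_enum_val (A := pred_of_set (succs B q))); apply: eq_bigr => c _.
by rewrite !mxE mulrC.
Qed.

End FrobeniusForm.

Lemma sma_sym_of_frobenius : Frobenius_sub S -> forall i j, B i j -> B j i.
Proof.
move=> [phi [_ [phiD phiZ phiM _ phi_onto]]].
apply: sym_of_card_preds_le_succs => // q.
exact: (frobenius_card_preds_le_succs phiD phiZ phiM phi_onto).
Qed.

End FrobeniusPreorder.

Lemma blocks_rel_of_equiv (n : nat) (B : rel 'I_n) :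
    (forall i, B i i) -> (forall i j l, B i j -> B j l -> B i l) ->
    (forall i j, B i j -> B j i) ->
  exists r (P : 'I_r -> {set 'I_n}), is_partition P /\ B =2 blocks_rel P.
Proof.
move=> Brefl Btrans Bsym.
have Beqv : {in [set: 'I_n] & &, equivalence_rel B}.
  move=> x y z _ _ _; split => [|Bxy]; first exact: Brefl.
  by apply/idP/idP; [apply: Btrans (Bsym _ _ Bxy) | apply: Btrans Bxy].
pose PP := equivalence_partition B [set: 'I_n].
have /and3P[/eqP coverPP trivPP nz_PP] := equivalence_partitionP Beqv.
have pblockPP := pblock_equivalence_partition Beqv.
have pblock_in i : pblock PP i \in PP by rewrite pblock_mem // coverPP inE.
exists #|PP|, (fun j => enum_val j); split; first split.
- move=> j; apply: contraNneq nz_PP => <-; exact: enum_valP.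
- move=> j j' njj'; apply: (trivIsetP trivPP); try exact: enum_valP.
  by apply: contra njj' => /eqP /enum_val_inj ->.
- move=> i; exists (enum_rank_in (pblock_in i) (pblock PP i)).
  by rewrite enum_rankK_in // mem_pblock coverPP inE.
move=> i l; apply/idP/existsP => [Bil|[j /andP[ij lj]]].
  exists (enum_rank_in (pblock_in i) (pblock PP i)); rewrite enum_rankK_in //.
  by rewrite mem_pblock coverPP inE /= pblockPP ?inE.
by rewrite -pblockPP ?inE // (def_pblock trivPP (enum_valP j) ij).
Qed.

Section Blocks.
Variables (k : fieldType) (n r : nat) (P : 'I_r -> {set 'I_n}) (B : rel 'I_n).
Hypothesis Ppart : is_partition P.
Hypothesis BP : B =2 blocks_rel P.
Local Notation S := (sma k B).

Definition block_restr (x : 'M[k]_n) (j : 'I_r) : 'M[k]_#|P j| :=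
  \matrix_(a, b) x (enum_val a) (enum_val b).

Definition block_glue (g : forall j : 'I_r, 'M[k]_#|P j|) : 'M[k]_n :=
  \matrix_(i, l) \sum_j \sum_(a | enum_val a == i) \sum_(b | enum_val b == l) g j a b.

Lemma block_uniq i j j' : i \in P j -> i \in P j' -> j = j'.
Proof.
case: Ppart => _ Pdisj _ ij ij'; apply/eqP/negP => /negP njj.
by have := disjointFr (Pdisj _ _ njj) ij; rewrite ij'.
Qed.

Lemma block_closed i l j : B i l -> i \in P j -> l \in P j.
Proof.
by rewrite BP => /existsP[j' /andP[ij' lj']] ij; rewrite (block_uniq ij ij').
Qed.

Lemma block_restrM x y j : x \in S ->
  block_restr (x *m y) j = block_restr x j *m block_restr y j.
Proof.
move=> /smaP xS; apply/matrixP => a b; rewrite !mxE.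
rewrite (bigID (mem (P j))) /= [X in _ + X]big1 ?addr0; last first.
  move=> l nl; case: (boolP (B (enum_val a) l)) => Bal; last by rewrite xS ?mul0r.
  by move: nl; rewrite (block_closed Bal (enum_valP a)).
rewrite (big_enum_val (A := pred_of_set (P j))).
by apply: eq_bigr => c _; rewrite !mxE.
Qed.

Lemma block_restr1 j : block_restr 1%:M j = 1%:M.
Proof. by apply/matrixP => a b; rewrite !mxE (inj_eq enum_val_inj). Qed.

Lemma block_restr_inj x y : x \in S -> y \in S ->
  (forall j, block_restr x j = block_restr y j) -> x = y.
Proof.
move=> /smaP xS /smaP yS xy; apply/matrixP => i l.
case: (boolP (B i l)) => Bil; last by rewrite xS ?yS.
have /existsP[j /andP[ij lj]] : blocks_rel P i l by rewrite -BP.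
have /matrixP /(_ (enum_rank_in ij i) (enum_rank_in ij l)) := xy j.
by rewrite !mxE !enum_rankK_in.
Qed.

Lemma sma_block_glue g : block_glue g \in S.
Proof.
apply/smaP => i l nB; rewrite mxE big1 // => j _.
apply: big1 => a /eqP ea; apply: big1 => b /eqP eb.
by move: nB; rewrite BP => /existsP; case; exists j; rewrite -ea -eb !enum_valP.
Qed.

Lemma block_glueK g j : block_restr (block_glue g) j = g j.
Proof.
apply/matrixP => a' b'; rewrite !mxE (bigD1 j) //= [X in _ + X]big1 ?addr0.
  rewrite (big_pred1 a'); last by move=> a /=; rewrite (inj_eq enum_val_inj).
  by rewrite (big_pred1 b') // => b /=; rewrite (inj_eq enum_val_inj).
move=> j' nj; apply: big1 => a /eqP ea.
have Pja : enum_val a \in P j by rewrite ea enum_valP.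
by case/negP: nj; apply/eqP; apply: block_uniq (enum_valP a) Pja.
Qed.

Lemma sma_iso_prod_blocks : alg_iso_prod S (fun j => #|P j|).
Proof.
exists block_restr; split; first by move=> x y _ _ j; apply/matrixP => a b; rewrite !mxE.
split.
- by move=> c x _ j; apply/matrixP => a b; rewrite !mxE.
- by move=> x y xS _ j; apply: block_restrM.
- exact: block_restr1.
- exact: block_restr_inj.
- by move=> g; exists (block_glue g); [apply: sma_block_glue | apply: block_glueK].
Qed.

End Blocks.

Theorem mainTheorem2 (k : fieldType) (n : nat) (B : rel 'I_n) :
  (0 < n)%N ->
  (forall i, B i i) ->
  (forall i j l, B i j -> B j l -> B i l) ->
  (Frobenius_sub (sma k B) <->
     exists r (P : 'I_r -> {set 'I_n}), is_partition P /\ B =2 blocks_rel P)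
  /\
  (forall r (P : 'I_r -> {set 'I_n}), is_partition P -> B =2 blocks_rel P ->
     alg_iso_prod (sma k B) (fun j => #|P j|)).
Proof.
move=> _ Brefl Btrans; split; last by move=> r P Ppart BP; apply: sma_iso_prod_blocks.
split => [frobB | [r [P [_ BP]]]].
  exact: blocks_rel_of_equiv Brefl Btrans (sma_sym_of_frobenius Brefl Btrans frobB).
apply: sma_frobenius_of_sym => i j; rewrite !BP => /existsP[l /andP[il jl]].
by apply/existsP; exists l; rewrite il jl.
Qed.
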